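(* Let $S$ be a state space and, for each temperature $T>0$, let $p_T(\cdot\mid\cdot)$ be a Markov transition kernel on $S$. Let $q_0$ be a probability distribution on $S$ (the data distribution) and $p^*$ a probability distribution on $S$ (the starting prior of generation). Fix integers $L\ge 1$ and $N_1>1$. For each $n\in\{0,1,\dots,N_1\}$ put $K_n=L+n$ and let $T^{(n)}_1,\dots,T^{(n)}_{K_n}$ be a temperature schedule with $T^{(n)}_t=1$ for $1\le t\le n+1$ (and $T^{(n)}_t\ge 1$ non-decreasing in $t$). Define the destructive (heating) process $$q^{(n)}(s_0,\dots,s_{K_n})=q_0(s_0)\prod_{t=1}^{K_n}p_{T^{(n)}_t}(s_t\mid s_{t-1})$$ and the generative (cooling) process $$p^{(n)}(s_0,\dots,s_{K_n})=p^*(s_{K_n})\prod_{t=1}^{K_n}p_{T^{(n)}_t}(s_{t-1}\mid s_t).$$ Suppose that (the model $p$ having enough capacity, training data and training time, with slow enough annealing and small enough departure from reversibility) at convergence of training $p$ matches $q$, i.e. $p^{(n)}=q^{(n)}$ as joint distributions on $S^{K_n+1}$ for every $n\in\{0,\dots,N_1\}$. Then $q_0$ is a stationary distribution of the temperature-1 transition operator $p_1$, i.e. $\int p_1(s\mid s')\,q_0(ds')=q_0(s)$.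
   Context: This is the convergence result for Variational Walkback (VW) training. In VW the same parameterized transition operator $p_T$ is used both for the forward destructive (heating) chain started at a data point and, read backwards in time, for the generative (cooling) chain started from $p^*$; a trajectory of length $K=L+n$ uses $n+1$ initial steps at temperature $1$ in the heating direction (equivalently, the last $n+1$ generative steps are at temperature $1$), with $n$ ranging over $\{0,\dots,N_1\}$. ''$p$ matches $q$'' is taken to mean equality of these joint trajectory distributions. The temperature-1 operator $p_1$ is the model used for sampling. *)

From HB Require Import structures.
From mathcomp Require Import all_boot all_order all_algebra.
From mathcomp Require Import all_classical all_reals all_analysis.
Set Implicit Arguments. Unset Strict Implicit. Unset Printing Implicit Defensive.
Import Order.TTheory GRing.Theory Num.Theory.
Local Open Scope classical_set_scope.
Local Open Scope ring_scope.

(* Temperature schedule for a trajectory with n extra temperature-1 steps: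
   base schedule tau_1 = 1, tau_2, ..., tau_L; the n-th schedule is
   T^(n)_t = 1 for 1 <= t <= n and T^(n)_t = tau_(t-n) for n < t <= L+n. *)
Definition sched (R : realType) (tau : nat -> R) (n t : nat) : R :=
  if (t <= n)%N then 1 else tau (t - n)%N.

Section Trajectories.
Context (R : realType) (d : measure_display) (S : measurableType d).
Context (pk : R -> R.-pker S ~> S) (T : nat -> R) (A : nat -> set S).
Local Open Scope ereal_scope.

Fixpoint fwd (m t : nat) (s : S) : \bar R :=
  match m with
  | 0 => 1
  | m'.+1 => \int[pk (T t.+1) s]_(y in A t.+1) fwd m' t.+1 y
  end.

Fixpoint bwd (m t : nat) (s : S) : \bar R :=
  match m with
  | 0 => 1
  | m'.+1 => \int[pk (T t) s]_(y in A t.-1) bwd m' t.-1 y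
  end.

End Trajectories.

Local Open Scope ereal_scope.
(* q(A_0 x ... x A_K) for the destructive process started at q0 *)
Definition heat_rect (R : realType) (d : measure_display) (S : measurableType d)
  (pk : R -> R.-pker S ~> S) (q0 : probability S R) (T : nat -> R)
  (A : nat -> set S) (K : nat) : \bar R :=
  \int[q0]_(s in A 0%N) fwd pk T A K 0 s.

(* p(A_0 x ... x A_K) for the generative process started at pstar at time K *)
Definition cool_rect (R : realType) (d : measure_display) (S : measurableType d)
  (pk : R -> R.-pker S ~> S) (pstar : probability S R) (T : nat -> R)
  (A : nat -> set S) (K : nat) : \bar R :=
  \int[pstar]_(s in A K) bwd pk T A K K s.

(* equality of the two joint laws on S^(K+1): they agree on all measurable
   rectangles (a pi-system generating the product sigma-algebra) *)
Definition joint_match (R : realType) (d : measure_display) (S : measurableType d)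
  (pk : R -> R.-pker S ~> S) (q0 pstar : probability S R) (T : nat -> R)
  (K : nat) : Prop :=
  forall A : nat -> set S, (forall t, measurable (A t)) ->
    heat_rect pk q0 T A K = cool_rect pk pstar T A K.

From HB Require Import structures.
From mathcomp Require Import all_boot all_order all_algebra.
From mathcomp Require Import all_classical all_reals all_analysis.
Set Implicit Arguments. Unset Strict Implicit. Unset Printing Implicit Defensive.
Import Order.TTheory GRing.Theory Num.Theory.
Local Open Scope classical_set_scope.
Local Open Scope ring_scope.

(* Only the schedules n = 0 and n = 1 matter.  The event {s_0 in B} has mass
   q0(B) under the heating law for n = 0, and the event {s_1 in B} has mass
   int q0(dx) p_1(x, B) under the heating law for n = 1.  Under the cooling
   laws the two events have the same mass: the n = 1 cooling chain is the
   n = 0 cooling chain followed by one more step to s_0, whose target is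
   unconstrained and which therefore contributes a factor 1. *)

Lemma schedSS (R : realType) (tau : nat -> R) (n t : nat) :
  sched tau n.+1 t.+1 = sched tau n t.
Proof. by rewrite /sched ltnS subSS. Qed.

Lemma sched_shift (R : realType) (tau : nat -> R) (n : nat) :
  sched tau n.+1 \o succn = sched tau n.
Proof. by apply/funext => t; exact: schedSS. Qed.

Section Trajectories.
Context (R : realType) (d : measure_display) (S : measurableType d).
Context (pk : R -> R.-pker S ~> S).
Local Open Scope ereal_scope.

Lemma integral_one (mu : measure S R) (D : set S) : measurable D ->
  \int[mu]_(x in D) (1 : \bar R) = mu D.
Proof. by move=> mD; rewrite -[RHS]mul1e -integral_cst. Qed.

Lemma fwd_setT (T : nat -> R) (A : nat -> set S) (m t : nat) (s : S) :
  (forall u, (t < u)%N -> A u = setT) -> fwd pk T A m t s = 1.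
Proof.
elim: m t s => [//|m IH] t s AT /=.
rewrite AT // (eq_integral (fun _ => 1)) ?integral_one ?prob_kernel //.
by move=> y _; apply: IH => u tu; apply: AT; exact: ltn_trans tu.
Qed.

Lemma bwd_shift (T : nat -> R) (A : nat -> set S) (m : nat) (s : S) :
  A 0%N = setT -> bwd pk T A m.+1 m.+1 s = bwd pk (T \o succn) (A \o succn) m m s.
Proof.
move=> A0; elim: m s => [|m IH] s /=; first by rewrite A0 integral_one ?prob_kernel.
by apply: eq_integral => y _; exact: IH.
Qed.

Lemma cool_rect_shift (pstar : probability S R) (T : nat -> R)
    (A : nat -> set S) (K : nat) :
  A 0%N = setT ->
  cool_rect pk pstar T A K.+1 = cool_rect pk pstar (T \o succn) (A \o succn) K.
Proof. by move=> A0; apply: eq_integral => s _; exact: bwd_shift. Qed.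

Lemma heat_rect_marginal0 (q0 : probability S R) (T : nat -> R)
    (A : nat -> set S) (K : nat) :
  measurable (A 0%N) -> (forall u, (0 < u)%N -> A u = setT) ->
  heat_rect pk q0 T A K = q0 (A 0%N).
Proof.
move=> mA0 AT; rewrite /heat_rect -integral_one //.
by apply: eq_integral => s _; exact: fwd_setT.
Qed.

Lemma heat_rect_marginal1 (q0 : probability S R) (T : nat -> R)
    (A : nat -> set S) (K : nat) :
  A 0%N = setT -> measurable (A 1%N) -> (forall u, (1 < u)%N -> A u = setT) ->
  heat_rect pk q0 T A K.+1 = \int[q0]_x pk (T 1%N) x (A 1%N).
Proof.
move=> A0 mA1 AT; rewrite /heat_rect A0; apply: eq_integral => s _ /=.
by rewrite -integral_one //; apply: eq_integral => y _; exact: fwd_setT.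
Qed.

End Trajectories.

Theorem proposition1 (R : realType) (d : measure_display) (S : measurableType d)
  (pk : R -> R.-pker S ~> S) (q0 pstar : probability S R)
  (L N1 : nat) (tau : nat -> R) :
  (1 <= L)%N -> (1 < N1)%N ->
  tau 1%N = 1 ->
  (forall t : nat, (1 <= t <= L)%N -> 1 <= tau t) ->
  (forall t u : nat, (1 <= t)%N -> (t <= u)%N -> (u <= L)%N -> tau t <= tau u) ->
  (forall n : nat, (n <= N1)%N -> joint_match pk q0 pstar (sched tau n) (L + n)) ->
  forall B : set S, measurable B ->
    q0 B = (\int[q0]_x pk 1%R x B)%E.
Proof.
move=> _ N1gt1 _ _ _ match_n B mB.
pose rect1 : nat -> set S := fun t => if t is 1%N then B else setT.
have mrect1 t : measurable (rect1 t).
  by case: t => [|[|t]]; [exact: measurableT | exact: mB | exact: measurableT].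
have match0 := match_n 0%N isT _ (fun t => mrect1 t.+1).
have match1 := match_n 1%N (ltnW N1gt1) _ mrect1.
rewrite addn0 in match0; rewrite addn1 in match1.
have heat0 : heat_rect pk q0 (sched tau 0) (rect1 \o succn) L = q0 B.
  by apply: heat_rect_marginal0 => // -[].
have heat1 : heat_rect pk q0 (sched tau 1) rect1 L.+1 = (\int[q0]_x pk 1%R x B)%E.
  by apply: heat_rect_marginal1 => // -[|[|u]].
by rewrite -heat0 -heat1 match0 match1 -(sched_shift tau 0) -cool_rect_shift.
Qed.
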